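(* Let $P$ and $Q$ be probability measures on a measurable space $(\mathcal T,\mathscr F)$ with $P\ll Q$, let $M\in(0,\infty)$, and let $\omega(\tau)=\frac{dP}{dQ}(\tau)$ and $\check\omega(\tau)=\min\{M,\omega(\tau)\}$. Then for any $\alpha\in(0,\infty]$ and any $\beta\in[0,1]$, $$\mathbb E_{\tau\sim Q}[\check\omega(\tau)^\alpha]^{1/\alpha}\le M^{1-\beta}d_{\alpha\beta}(P\|Q)^{\beta-\frac1\alpha}.$$ Furthermore, for any $\beta\in[1,\infty]$, $$\mathbb E_{\tau\sim Q}[\omega(\tau)-\check\omega(\tau)]\le\left(\frac{d_\beta(P\|Q)}{M}\right)^{\beta-1}.$$
   Context: For $P\ll Q$ and $\gamma\in[0,\infty]$, the Rényi divergence is $D_\gamma(P\|Q)=\frac{1}{\gamma-1}\log\int(\frac{dP}{dQ})^\gamma dQ$ (with the limiting values at $\gamma=1$, where it equals the KL divergence, and at $\gamma=\infty$, where $D_\infty=\log\operatorname{ess\,sup}\frac{dP}{dQ}$), and the exponentiated Rényi divergence is $d_\gamma(P\|Q)=\exp[D_\gamma(P\|Q)]$. In particular $\mathbb E_Q[(\frac{dP}{dQ})^\gamma]=d_\gamma(P\|Q)^{\gamma-1}$. *)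

From HB Require Import structures.
From mathcomp Require Import all_boot all_order all_algebra.
From mathcomp Require Import all_classical all_reals all_analysis ess_sup_inf hoelder.
Set Implicit Arguments. Unset Strict Implicit. Unset Printing Implicit Defensive.
Import Order.TTheory GRing.Theory Num.Theory.
Import numFieldNormedType.Exports.
Local Open Scope classical_set_scope.
Local Open Scope ring_scope.
Local Open Scope ereal_scope.

Definition is_density d (T : measurableType d) (R : realType)
    (P Q : {measure set T -> \bar R}) (omega : T -> R) : Prop :=
  [/\ measurable_fun setT omega,
      (forall x, (0 <= omega x)%R) &
      forall A, measurable A -> P A = \int[Q]_(x in A) (omega x)%:E].

(** Exponentiated Renyi divergence d_g(P||Q) = exp D_g(P||Q), expressed via
    omega = dP/dQ, for g in [0, +oo] (limiting values at g = 0, 1, +oo). *)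
Definition renyi_exp d (T : measurableType d) (R : realType)
    (Q : {measure set T -> \bar R}) (omega : T -> R) (g : \bar R) : \bar R :=
  match g with
  | +oo => ess_sup Q (fun x => (omega x)%:E)
  | g'%:E =>
      if g' == 0%R then
        (* D_0 = - log Q(dP/dQ > 0) *)
        (fine (Q [set x | (0 < omega x)%R]))^-1%:E
      else if g' == 1%R then
        (* D_1 = KL(P||Q) = E_Q[omega log omega] *)
        expeR (\int[Q]_x (omega x * ln (omega x))%:E)
      else
        poweR (\int[Q]_x (powR (omega x) g')%:E) (g' - 1)^-1
  | -oo => 0
  end.

(** Power x^e of an extended nonnegative real x by an extended exponent
    e in [0, +oo]; for e = +oo the limit value (0 if x<1, 1 if x=1, +oo if x>1). *)
Definition epow (R : realType) (x e : \bar R) : \bar R :=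
  match e with
  | e'%:E => poweR x e'
  | +oo => if x < 1 then 0 else if x == 1 then 1 else +oo
  | -oo => 0
  end.

From HB Require Import structures.
From mathcomp Require Import all_boot all_order all_algebra.
From mathcomp Require Import all_classical all_reals all_analysis ess_sup_inf hoelder.
From mathcomp Require Import measurable_realfun.
From mathcomp Require Import ring.
Import Order.TTheory GRing.Theory Num.Theory.
Import numFieldNormedType.Exports.
Local Open Scope classical_set_scope.
Local Open Scope ring_scope.

(* The truncation [min M w] lies below both M and w, hence below the weighted
   geometric mean M^(1-b) w^b for every b in [0,1]. Raising to the power a and
   integrating bounds its L^a(Q) norm by M^(1-b) E_Q[w^(ab)]^(1/a), and
   E_Q[w^g] = d_g^(g-1) turns this into M^(1-b) d_(ab)^(b - 1/a); for a = +oo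
   the same bound, applied a.e. with w replaced by ess sup w, is the claim.
   The excess w - min M w vanishes where w <= M and is at most w (w/M)^(b-1)
   elsewhere, whose expectation is (d_b/M)^(b-1). *)

Section powR_bounds.
Variable R : realType.
Implicit Types a x y b w M : R.

Lemma le_powR_geomean a x y b : 0 <= a -> a <= x -> a <= y -> 0 <= b <= 1 ->
  a <= x `^ (1 - b) * y `^ b.
Proof.
move=> a_ge0 ax ay /andP[b_ge0 b_le1].
have [->|a_neq0] := eqVneq a 0; first by rewrite mulr_ge0 ?powR_ge0.
have -> : a = a `^ (1 - b) * a `^ b.
  by rewrite -powRD ?subrK ?powRr1 //; apply/implyP.
apply: ler_pM; rewrite ?powR_ge0 //.
  by apply: ge0_ler_powR; rewrite ?nnegrE ?subr_ge0 //; apply: (le_trans a_ge0).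
by apply: ge0_ler_powR; rewrite ?nnegrE //; apply: (le_trans a_ge0).
Qed.

Lemma sub_minr_le_powR w M b : 0 <= w -> 0 < M -> 1 <= b ->
  w - Num.min M w <= w `^ b * M^-1 `^ (b - 1).
Proof.
move=> w_ge0 M_gt0 b_ge1.
have [_|/ltW Mw] := leP w M; first by rewrite subrr mulr_ge0 ?powR_ge0.
have w_gt0 : 0 < w by apply: lt_le_trans Mw.
rewrite -(mulr_powRB1 w_ge0 (lt_le_trans ltr01 b_ge1)) -mulrA.
rewrite -powRM ?invr_ge0 ?(ltW M_gt0) //.
apply: le_trans (_ : w <= _); first by rewrite lerBlDr lerDl (ltW M_gt0).
rewrite -{1}(mulr1 w) ler_pM2l // -[X in X <= _](powRr0 (w * M^-1)).
by apply: ler_powR; rewrite ?subr_ge0 // ler_pdivlMr // mul1r.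
Qed.

End powR_bounds.

Local Open Scope ereal_scope.

Lemma Lnorm_le_integral_powR {d} {T : measurableType d} {R : realType}
    (mu : {measure set T -> \bar R}) {f g : T -> R} {a c : R} :
  (0 < a)%R -> (0 <= c)%R -> measurable_fun setT f -> measurable_fun setT g ->
  (forall x, 0 <= g x)%R -> (forall x, `|f x| <= c * g x)%R ->
  Lnorm mu a%:E (fun x => (f x)%:E) <= c%:E * (\int[mu]_x (g x `^ a)%:E) `^ a^-1.
Proof.
move=> a_gt0 c_ge0 f_meas g_meas g_ge0 f_le.
have powR_meas (h : T -> R) : measurable_fun setT h ->
    measurable_fun setT (fun x => (h x `^ a)%:E).
  move=> h_meas; apply/measurable_EFinP.
  exact: measurableT_comp (measurable_powR a) h_meas.
have gpow_meas := powR_meas g g_meas.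
have intg_ge0 : 0 <= \int[mu]_x (g x `^ a)%:E.
  by apply: integral_ge0 => x _; rewrite lee_fin powR_ge0.
have -> : c%:E = ((c `^ a) `^ a^-1)%:E by rewrite -powRrM divff ?gt_eqF ?powRr1.
rewrite unlock /= -poweR_EFin -poweRM ?lee_fin ?powR_ge0 //.
apply: gt0_ler_poweR.
- by rewrite invr_ge0 (ltW a_gt0).
- by rewrite in_itv /= leey andbT integral_ge0 // => x _; rewrite poweR_ge0.
- by rewrite in_itv /= leey andbT mule_ge0 ?lee_fin ?powR_ge0.
rewrite -ge0_integralZl ?lee_fin ?powR_ge0 //; last by move=> x _; rewrite lee_fin powR_ge0.
apply: ge0_le_integral => //.
- apply: (powR_meas (fun x => `|f x|)%R).
  by apply: (measurableT_comp (f := fun r : R => `|r|%R)) => //; exact: normr_measurable.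
- exact: emeasurable_funM.
move=> x _; rewrite -EFinM lee_fin -powRM ?(ltW a_gt0) //.
by apply: ge0_ler_powR; rewrite ?nnegrE ?mulr_ge0 ?(ltW a_gt0).
Qed.

Section truncated_density.
Context d (T : measurableType d) (R : realType) (Q : probability T R).
Variables (omega : T -> R) (M : R).
Hypotheses (omega_meas : measurable_fun setT omega)
  (omega_ge0 : forall x, (0 <= omega x)%R)
  (omega_int1 : \int[Q]_x (omega x)%:E = 1) (M_gt0 : (0 < M)%R).

Let trunc_meas : measurable_fun setT (fun x => Num.min M (omega x)).
Proof. exact: measurable_minr. Qed.

Let trunc_ge0 x : (0 <= Num.min M (omega x))%R.
Proof. by rewrite le_min omega_ge0 (ltW M_gt0). Qed.

Let trunc_le_M x : (Num.min M (omega x) <= M)%R.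
Proof. by rewrite ge_min lexx. Qed.

Let trunc_le_omega x : (Num.min M (omega x) <= omega x)%R.
Proof. by rewrite ge_min lexx orbT. Qed.

Let support_meas : measurable [set x | (0 < omega x)%R].
Proof.
have -> : [set x | (0 < omega x)%R] = omega @^-1` `]0%R, +oo[.
  by apply/seteqP; split => x /=; rewrite in_itv /= andbT.
by rewrite -[_ @^-1` _]setTI; apply: omega_meas => //; exact: measurable_itv.
Qed.

Let excess_meas :
  measurable_fun setT (fun x => (omega x - Num.min M (omega x))%:E).
Proof. exact/measurable_EFinP/measurable_funB. Qed.

Lemma poweR_renyi_exp (g : R) : (g != 0)%R -> (g != 1)%R ->
  renyi_exp Q omega g%:E `^ (g - 1) = \int[Q]_x (omega x `^ g)%:E.
Proof.
move=> g_neq0 g_neq1; rewrite /renyi_exp (negbTE g_neq0) (negbTE g_neq1).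
rewrite -poweRrM mulVf ?subr_eq0 // poweRe1 //.
by apply: integral_ge0 => x _; rewrite lee_fin powR_ge0.
Qed.

Lemma epow_renyi_exp_mul (a b : R) : (a != 0)%R -> (b != 0)%R ->
  epow (renyi_exp Q omega (a%:E * b%:E)) (b - a^-1)%:E
  = (\int[Q]_x (omega x `^ (a * b))%:E) `^ a^-1.
Proof.
move=> a_neq0 b_neq0; rewrite -EFinM /epow.
have [ab1|ab_neq1] := eqVneq (a * b)%R 1%R.
  have -> : (b - a^-1 = 0)%R by rewrite -{1}(mulKf a_neq0 b) ab1 mulr1 subrr.
  rewrite poweRe0.
  have -> : \int[Q]_x (omega x `^ (a * b))%:E = 1.
    by rewrite -omega_int1 ab1; apply: eq_integral => x _; rewrite powRr1.
  by rewrite poweR1r.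
have -> : (b - a^-1 = (a * b - 1) * a^-1)%R by field.
by rewrite poweRrM poweR_renyi_exp ?mulf_neq0.
Qed.

Lemma Lnorm_trunc_le_support (a : R) : (0 < a)%R ->
  Lnorm Q a%:E (fun x => (Num.min M (omega x))%:E)
  <= M%:E * Q [set x | 0 < omega x]%R `^ a^-1.
Proof.
move=> a_gt0; set A := [set x | (0 < omega x)%R].
apply: le_trans (Lnorm_le_integral_powR Q a_gt0 (ltW M_gt0) trunc_meas
  (measurable_indic support_meas) _ _) _.
- by move=> x; rewrite indicE; case: (_ \in _).
- move=> x; rewrite indicE ger0_norm //; case: (boolP (x \in A)) => [_|].
    by rewrite mulr1.
  by rewrite notin_setE /= => /negP; rewrite -leNgt mulr0; apply: le_trans.
suff -> : \int[Q]_x ((\1_A x : R) `^ a)%:E = Q A by [].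
rewrite -[X in _ = Q X]setIT -integral_indic //; apply: eq_integral => x _.
by rewrite indicE; case: (x \in A); rewrite ?powR1 ?powR0 ?gt_eqF.
Qed.

Lemma Lnorm_trunc_le_moment (a b : R) : (0 < a)%R -> (0 <= b <= 1)%R ->
  Lnorm Q a%:E (fun x => (Num.min M (omega x))%:E)
  <= (M `^ (1 - b))%:E * (\int[Q]_x (omega x `^ (a * b))%:E) `^ a^-1.
Proof.
move=> a_gt0 b01; under eq_integral do rewrite mulrC powRrM.
apply: Lnorm_le_integral_powR => //.
- exact: powR_ge0.
- exact: measurableT_comp (measurable_powR b) omega_meas.
- by move=> x; rewrite powR_ge0.
- by move=> x; rewrite ger0_norm //; apply: le_powR_geomean.
Qed.

Lemma Lnorm_trunc_le_renyi (a b : R) : (0 < a)%R -> (0 <= b <= 1)%R ->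
  Lnorm Q a%:E (fun x => (Num.min M (omega x))%:E)
  <= (M `^ (1 - b))%:E * epow (renyi_exp Q omega (a%:E * b%:E)) (b - a^-1)%:E.
Proof.
move=> a_gt0 b01; have a_neq0 : (a != 0)%R by rewrite gt_eqF.
have [->|b_neq0] := eqVneq b 0%R; last first.
  by rewrite epow_renyi_exp_mul //; exact: Lnorm_trunc_le_moment.
rewrite -EFinM mulr0 subr0 powRr1 ?(ltW M_gt0) // sub0r /epow /renyi_exp eqxx.
rewrite poweR_EFin -[((fine _)^-1)%R]powR_inv1 ?fine_ge0 ?measure_ge0 //.
rewrite -powRrM mulN1r opprK -poweR_EFin fineK ?fin_num_measure //.
exact: Lnorm_trunc_le_support.
Qed.

Lemma Lnorm_pinfty_trunc_le_renyi (b : R) : (0 <= b <= 1)%R ->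
  Lnorm Q +oo (fun x => (Num.min M (omega x))%:E)
  <= (M `^ (1 - b))%:E * epow (renyi_exp Q omega (+oo * b%:E)) b%:E.
Proof.
move=> b01; rewrite unlock /= probability_setT lte01.
have [->|b_neq0] := eqVneq b 0%R.
  rewrite /epow poweRe0 mule1 subr0 powRr1 ?(ltW M_gt0) //.
  by apply/ess_supP/nearW => x /=; rewrite lee_fin ger0_norm.
have b_gt0 : (0 < b)%R by rewrite lt0r b_neq0; case/andP: b01.
rewrite gt0_mulye ?lte_fin // /renyi_exp /epow.
apply/ess_supP; apply: filterS (ess_sup_ge Q (fun x => (omega x)%:E)) => x /=.
case: (ess_sup Q _) => [r| |] omega_le.
- rewrite poweR_EFin -EFinM lee_fin ger0_norm //.
  by apply: le_powR_geomean => //; apply: le_trans (trunc_le_omega x) _; rewrite -lee_fin.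
- by rewrite poweRyr ?gt_eqF // muleC gt0_mulye ?leey // lte_fin powR_gt0.
- by rewrite leeNy_eq in omega_le.
Qed.

Lemma integral_excess_le_renyi (b : R) : (1 <= b)%R ->
  \int[Q]_x (omega x - Num.min M (omega x))%:E
  <= epow (renyi_exp Q omega b%:E * (M^-1)%:E) (b%:E - 1).
Proof.
move=> b_ge1; rewrite -EFinB /epow.
have [->|b_neq1] := eqVneq b 1%R.
  rewrite subrr poweRe0 -omega_int1; apply: ge0_le_integral => //.
  - by move=> x _; rewrite lee_fin subr_ge0.
  - exact/measurable_EFinP.
  - by move=> x _; rewrite lee_fin gerBl.
have b_gt1 : (1 < b)%R by rewrite lt_neqAle eq_sym b_neq1.
have b_gt0 := lt_trans ltr01 b_gt1.
have omega_pow_meas : measurable_fun setT (fun x => (omega x `^ b)%:E).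
  exact/measurable_EFinP/(measurableT_comp (measurable_powR b) omega_meas).
rewrite poweRM ?lee_fin ?invr_ge0 ?(ltW M_gt0) //; last first.
  by rewrite /renyi_exp (gt_eqF b_gt0) (negbTE b_neq1) poweR_ge0.
rewrite poweR_renyi_exp ?gt_eqF // poweR_EFin -ge0_integralZr ?lee_fin ?powR_ge0 //.
- apply: ge0_le_integral => //.
  + by move=> x _; rewrite lee_fin subr_ge0.
  + exact: emeasurable_funM.
  + by move=> x _; rewrite -EFinM lee_fin sub_minr_le_powR.
- by move=> x _; rewrite lee_fin powR_ge0.
Qed.

Lemma integral_excess_le_ess_sup :
  \int[Q]_x (omega x - Num.min M (omega x))%:E
  <= epow (renyi_exp Q omega +oo * (M^-1)%:E) (+oo - 1).
Proof.
rewrite /renyi_exp /epow /=; set s := ess_sup Q _.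
have [sM|Ms] := leP s M%:E.
  have -> : \int[Q]_x (omega x - Num.min M (omega x))%:E = 0.
    rewrite (@ae_eq_integral _ _ _ _ _ (cst 0)) ?integral0 //.
    move: (ess_sup_ge Q (fun x => (omega x)%:E)); apply: filterS => x /= omega_le _.
    by rewrite min_r ?subrr // -lee_fin (le_trans omega_le).
  by case: ifP => // _; case: ifP.
have s_gt1 : 1 < s * (M^-1)%:E.
  move: Ms; case: s => [r| |] //= Ms.
  - by rewrite -EFinM lte_fin ltr_pdivlMr // mul1r -lte_fin.
  - by rewrite gt0_mulye ?lte_fin ?invr_gt0 // ltry.
by rewrite ltNge (ltW s_gt1) /= (gt_eqF s_gt1) leey.
Qed.

End truncated_density.

Theorem lemma1 (d : measure_display) (T : measurableType d) (R : realType)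
    (P Q : probability T R) (omega : T -> R) (M : R) :
  P `<< Q ->
  is_density P Q omega ->
  (0 < M)%R ->
  (forall (alpha : \bar R) (beta : R),
      0 < alpha -> (0 <= beta <= 1)%R ->
      Lnorm Q alpha (fun x => (Num.min M (omega x))%:E)
        <= (powR M (1 - beta))%:E *
           epow (renyi_exp Q omega (alpha * beta%:E))
                (match alpha with
                 | a%:E => (beta - a^-1)%:E
                 | _ => beta%:E end)) /\
  (forall beta : \bar R, 1 <= beta ->
      \int[Q]_x (omega x - Num.min M (omega x))%:E
        <= epow (renyi_exp Q omega beta * (M^-1)%:E) (beta - 1)).
Proof.
(* [P `<< Q] is already implied by the density. *)
move=> _ [omega_meas omega_ge0 P_density] M_gt0.
have omega_int1 : \int[Q]_x (omega x)%:E = 1.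
  by rewrite -P_density //; exact: probability_setT.
split.
- move=> [a| |] b //; rewrite ?lte_fin => alpha_gt0 b01.
  + by apply: Lnorm_trunc_le_renyi.
  + by apply: Lnorm_pinfty_trunc_le_renyi.
- move=> [b| |] //; rewrite ?lee_fin => b_ge1.
  + by apply: integral_excess_le_renyi.
  + by apply: integral_excess_le_ess_sup.
Qed.
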